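(* Let $a<b$ be elements of $\mathcal{C}_n$ and let $Id\left(\mathcal{STR}^{(n)}\{a,b\}\right)=\{a_\ell b_{n-\ell}:\ a+1\le\ell\le b\}$. Then $Id\left(\mathcal{STR}^{(n)}\{a,b\}\right)$ is a subsemiring of $\mathcal{STR}^{(n)}\{a,b\}$ which consists exactly of the (multiplicatively) idempotent elements of $\mathcal{STR}^{(n)}\{a,b\}$ different from $\overline{a}$ and $\overline{b}$, and it has $b-a$ elements.
   Context: $\mathcal{C}_n=\{0,1,\dots,n-1\}$ with its usual order; $\widehat{\mathcal{E}}_{\mathcal{C}_n}$ is the set of all order-preserving maps $\mathcal{C}_n\to\mathcal{C}_n$ (not required to fix $0$), a semiring with $(\alpha+\beta)(x)=\max(\alpha(x),\beta(x))$ and $(\alpha\cdot\beta)(x)=\beta(\alpha(x))$. The string $\mathcal{STR}^{(n)}\{a,b\}$ is the set of $\alpha\in\widehat{\mathcal{E}}_{\mathcal{C}_n}$ with image in $\{a,b\}$; its elements are written $a_kb_{n-k}$ ($0\le k\le n$), the map sending $0,\dots,k-1$ to $a$ and $k,\dots,n-1$ to $b$; $\overline{a}$, $\overline{b}$ are the constant maps. *)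

From mathcomp Require Import all_boot all_order.
Set Implicit Arguments. Unset Strict Implicit. Unset Printing Implicit Defensive.

(* Maps C_n -> C_n, C_n = 'I_n = {0,...,n-1}. *)
Notation endo n := {ffun 'I_n -> 'I_n}.

Definition Ehat (n : nat) : {set endo n} :=
  [set f : endo n | [forall x : 'I_n, forall y : 'I_n, (x <= y)%N ==> (f x <= f y)%N]].

Definition addE (n : nat) (f g : endo n) : endo n :=
  [ffun x => if (f x <= g x)%N then g x else f x].

Definition mulE (n : nat) (f g : endo n) : endo n := [ffun x => g (f x)].

Definition STR (n : nat) (a b : 'I_n) : {set endo n} :=
  [set f in Ehat n | [forall x, (f x == a) || (f x == b)]].

(* a_k b_{n-k}: sends 0..k-1 to a and k..n-1 to b. *)
Definition str_ab (n : nat) (a b : 'I_n) (k : nat) : endo n :=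
  [ffun x : 'I_n => if (x < k)%N then a else b].

Definition cst (n : nat) (c : 'I_n) : endo n := [ffun _ => c].

Definition IdSTR (n : nat) (a b : 'I_n) : {set endo n} :=
  [set str_ab a b l | l : 'I_n.+1 & (a.+1 <= l <= b)%N].

Definition subsemiring (n : nat) (S T : {set endo n}) : Prop :=
  [/\ S \subset T,
      {in S &, forall f g, addE f g \in S} &
      {in S &, forall f g, mulE f g \in S}].

(* Every element of STR^(n){a,b} is a step map a_k b_{n-k}, 0 <= k <= n, with
   k = n and k = 0 giving the constants.  For 0 < k < n both a and b are values,
   so a_k b_{n-k} is idempotent iff it fixes a and b, i.e. iff a < k <= b.  Such a
   map fixes every value of any element of STR^(n){a,b}, hence is a right identity
   there; and the sum of two step maps is the step map at the smaller threshold.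
   Distinct thresholds give distinct maps, whence the count b - a. *)
From mathcomp Require Import all_boot all_order.
From mathcomp Require Import zify.

Set Implicit Arguments.
Unset Strict Implicit.
Unset Printing Implicit Defensive.

Lemma card_ord_range (n m p : nat) :
  (p < n)%N -> #|[set i : 'I_n | (m < i <= p)%N]| = (p - m)%N.
Proof.
move=> pn; rewrite -sum1dep_card -subSS -[RHS]muln1.
rewrite -(sum_nat_const_nat m.+1 p.+1 1) (big_nat_widen _ _ _ _ _ pn).
by rewrite big_geq_mkord; apply: eq_bigl => i; rewrite andbC.
Qed.

Section StepMaps.

Variables (n : nat) (a b : 'I_n).
Hypothesis a_lt_b : (a < b)%N.

Let a_neq_b : a != b.
Proof. by rewrite neq_ltn a_lt_b. Qed.

Let n_gt0 : (0 < n)%N.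
Proof. exact: leq_ltn_trans (leq0n a) (ltn_ord a). Qed.

Lemma str_ab_in_STR (k : nat) : str_ab a b k \in STR a b.
Proof.
rewrite !inE; apply/andP; split.
  apply/forallP => x; apply/forallP => y; apply/implyP => xy; rewrite !ffunE.
  by case: ifP; case: ifP => //= *; lia.
by apply/forallP => x; rewrite ffunE; case: ifP; rewrite eqxx ?orbT.
Qed.

(* The threshold is the first point sent to b, or n if there is none. *)
Lemma STR_str_ab (f : endo n) :
  f \in STR a b -> exists2 k, (k <= n)%N & f = str_ab a b k.
Proof.
rewrite !inE => /andP[/forallP f_mono /forallP f_ab].
pose k := find (fun x : 'I_n => f x == b) (enum 'I_n).
exists k; first by rewrite -[X in (_ <= X)%N]size_enum_ord find_size.
apply/ffunP => x; rewrite ffunE; case: ifP => x_lt_k.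
  have := before_find x x_lt_k; rewrite nth_ord_enum.
  by case/orP: (f_ab x) => /eqP ->; rewrite ?eqxx.
have k_lt_n : (k < n)%N by move: (ltn_ord x); lia.
have has_b : has (fun y : 'I_n => f y == b) (enum 'I_n).
  by rewrite has_find size_enum_ord.
pose y := nth x (enum 'I_n) k.
have /eqP fy : f y == b := nth_find x has_b.
have y_le_x : (y <= x)%N by rewrite nth_enum_ord // leqNgt x_lt_k.
case/orP: (f_ab x) => /eqP fx; last by rewrite fx.
by have := forallP (f_mono y) x; rewrite y_le_x fy fx ltn_geF.
Qed.

Lemma str_ab_eq_csta (k : nat) : (str_ab a b k == cst a) = (n <= k)%N.
Proof.
apply/eqP/idP => [/ffunP E | nk].
  rewrite leqNgt; apply/negP => kn.
  by move: (E (Ordinal kn)) a_neq_b; rewrite !ffunE ltnn /= => ->; rewrite eqxx.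
by apply/ffunP => x; rewrite !ffunE (leq_trans (ltn_ord x)).
Qed.

Lemma str_ab_eq_cstb (k : nat) : (str_ab a b k == cst b) = (k == 0%N).
Proof.
apply/eqP/eqP => [/ffunP E | ->]; last by apply/ffunP => x; rewrite !ffunE.
apply/eqP; rewrite -leqn0 leqNgt; apply/negP => k_gt0.
by move: (E (Ordinal n_gt0)) a_neq_b; rewrite !ffunE /= k_gt0 => ->; rewrite eqxx.
Qed.

Lemma str_ab_inj : injective (fun l : 'I_n.+1 => str_ab a b l).
Proof.
suff lt_neq (l1 l2 : 'I_n.+1) : (l1 < l2)%N -> str_ab a b l1 != str_ab a b l2.
  move=> l1 l2 E; apply/val_inj/eqP.
  by case: ltngtP => // /lt_neq; rewrite E eqxx.
move=> lt12; have l1n : (l1 < n)%N by move: (ltn_ord l2); lia.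
apply/eqP => /ffunP/(_ (Ordinal l1n)); rewrite !ffunE /= ltnn lt12 => E.
by move: a_neq_b; rewrite E eqxx.
Qed.

Lemma addE_str_ab (k l : nat) :
  addE (str_ab a b k) (str_ab a b l) = str_ab a b (minn k l).
Proof.
apply/ffunP => x; rewrite !ffunE leq_min.
case: (x < k)%N; case: (x < l)%N => //=; rewrite ?leqnn //.
  by rewrite (ltnW a_lt_b).
by rewrite leqNgt a_lt_b.
Qed.

Lemma mulE_str_ab (f : endo n) (l : nat) :
  (a < l <= b)%N -> f \in STR a b -> mulE f (str_ab a b l) = f.
Proof.
move=> /andP[al lb]; rewrite inE => /andP[_ /forallP f_ab].
apply/ffunP => x; rewrite !ffunE.
by case/orP: (f_ab x) => /eqP ->; rewrite ?al // ltnNge lb.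
Qed.

Lemma str_ab_idem (k : nat) : (0 < k < n)%N ->
  (mulE (str_ab a b k) (str_ab a b k) == str_ab a b k) = (a < k <= b)%N.
Proof.
move=> /andP[k_gt0 k_lt_n]; apply/eqP/idP => [/ffunP idem | kab]; last first.
  by apply: mulE_str_ab => //; apply: str_ab_in_STR.
move: (idem (Ordinal n_gt0)) (idem (Ordinal k_lt_n)).
rewrite !ffunE /= k_gt0 ltnn.
case: (ltnP a k) => [_ _ | _ E]; last by move: a_neq_b; rewrite E eqxx.
by case: (ltnP b k) => // _ E; move: a_neq_b; rewrite E eqxx.
Qed.

End StepMaps.

Theorem proposition10 (n : nat) (a b : 'I_n) (hab : (a < b)%N) :
  [/\ subsemiring (IdSTR a b) (STR a b),
      IdSTR a b = [set f in STR a b | (mulE f f == f) && (f != cst a) && (f != cst b)]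
    & #|IdSTR a b| = (b - a)%N].
Proof.
have IdSTR_STR : IdSTR a b \subset STR a b.
  by apply/subsetP => f /imsetP[l _ ->]; apply: str_ab_in_STR.
split.
- split=> // [_ _ /imsetP[l1 + ->] /imsetP[l2 + ->] | f _ fI /imsetP[l + ->]].
    rewrite !inE (addE_str_ab hab) => /andP[al1 l1b] /andP[al2 l2b].
    have min_lt : (minn l1 l2 < n.+1)%N := leq_ltn_trans (geq_minl l1 l2) (ltn_ord l1).
    apply/imsetP; exists (Ordinal min_lt) => //.
    by rewrite inE /= leq_min geq_min al1 al2 l1b.
  by rewrite inE => lab; rewrite mulE_str_ab // (subsetP IdSTR_STR).
- apply/setP => f; rewrite [in RHS]inE.
  apply/idP/idP => [fI | /andP[fS /andP[/andP[idem nca] ncb]]].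
    rewrite (subsetP IdSTR_STR f fI) /=.
    case/imsetP: fI => l; rewrite inE => /andP[al lb] ->.
    have l_gt0 : (0 < l)%N := leq_ltn_trans (leq0n a) al.
    have l_lt_n : (l < n)%N := leq_ltn_trans lb (ltn_ord b).
    rewrite str_ab_idem ?l_gt0 ?l_lt_n // str_ab_eq_csta // str_ab_eq_cstb //.
    by rewrite al lb -ltnNge l_lt_n -lt0n l_gt0.
  have [k kn Ef] := STR_str_ab hab fS.
  move: idem nca ncb; rewrite Ef str_ab_eq_csta // str_ab_eq_cstb // -ltnNge -lt0n.
  move=> idem k_lt_n k_gt0; rewrite str_ab_idem ?k_gt0 ?k_lt_n // in idem.
  by apply/imsetP; exists (Ordinal (kn : (k < n.+1)%N)); rewrite ?inE.
- rewrite card_imset; last exact: str_ab_inj hab.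
  exact: card_ord_range (leqW (ltn_ord b)).
Qed.
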